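(* Let $(x_n)_{n\in\mathbb{N}}$ be a strictly increasing sequence of nonnegative reals with $x_0=0$, $x_0!=1$, $x_n!=x_1\cdots x_n$, and let $\mathcal{N}(t)=\sum_{n\ge 0}t^n/x_n!$ have radius of convergence $R>0$. For $z\in\mathbb{C}$ with $|z|^2<R$ and $t\in\mathbb{R}$ define $$\check z(t)=\frac{z}{\mathcal{N}(|z|^2)}\sum_{n=0}^{\infty}\frac{|z|^{2n}}{x_n!}\exp\big(i(x_{n+2}-x_{n+1})t\big).$$ Then $|\check z(t)|\le |z|$ for all $t\in\mathbb{R}$.
   Context: $\check z(t)$ is the coherent-state expectation (lower symbol) of the time-evolved lowering operator under the Hamiltonian with spectrum $(x_{n+1})$, i.e. the semi-classical phase-space trajectory. *)

From Stdlib Require Import Reals.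
From Coquelicot Require Export Coquelicot.
Open Scope R_scope.

Fixpoint xfact (x : nat -> R) (n : nat) : R :=
  match n with
  | O => 1
  | S m => xfact x m * x (S m)
  end.

Definition Ncoef (x : nat -> R) (n : nat) : R := / xfact x n.

Definition Nfun (x : nat -> R) (t : R) : R := Series (fun n => Ncoef x n * t ^ n).

Definition cis (theta : R) : C := (cos theta, sin theta).

Definition Csum (a : nat -> C) : C :=
  (Series (fun n => fst (a n)), Series (fun n => snd (a n))).

Definition zcheck (x : nat -> R) (z : C) (t : R) : C :=
  (z / RtoC (Nfun x (Cmod z ^ 2)) *
   Csum (fun n => RtoC (Cmod z ^ (2 * n) / xfact x n)
                  * cis ((x (n + 2)%nat - x (n + 1)%nat) * t)))%C.

(** [z-check(t) = z * S / N] with [S = sum_n a_n e^(i theta_n)], [a_n = |z|^(2n) / x_n! >= 0]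
    and [N = sum_n a_n >= a_0 = 1], so it suffices that [|S| <= N], the triangle inequality
    for series.  Complex series being summed componentwise, that inequality comes from
    Cauchy-Schwarz in the plane: for the sum [s] of [c_n], [|s|^2 = sum_n <s, c_n> <= |s| sum_n |c_n|]. *)

From Stdlib Require Import Reals Lra.
From Coquelicot Require Import Coquelicot.
Open Scope R_scope.

Lemma Rabs_Series_le (f g : nat -> R) :
  (forall n, Rabs (f n) <= g n) -> ex_series g -> Rabs (Series f) <= Series g.
Proof.
  intros Hfg Hg.
  assert (Hf : ex_series (fun n => Rabs (f n))).
  { apply (@ex_series_le R_AbsRing R_CompleteNormedModule _ g); [| exact Hg].
    intros n; change norm with Rabs; rewrite Rabs_Rabsolu; apply Hfg. }
  eapply Rle_trans; [exact (Series_Rabs f Hf) |].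
  apply Series_le; [| exact Hg].
  intros n; split; [apply Rabs_pos | apply Hfg].
Qed.

Lemma Series_ge0 (a : nat -> R) : (forall n, 0 <= a n) -> ex_series a -> 0 <= Series a.
Proof.
  intros Ha Hex; eapply Rle_trans; [apply (Rabs_pos (Series a)) |].
  apply Rabs_Series_le; [| exact Hex].
  intros n; rewrite Rabs_pos_eq; [lra | apply Ha].
Qed.

Lemma Series_ge_head (a : nat -> R) : (forall n, 0 <= a n) -> ex_series a -> a 0%nat <= Series a.
Proof.
  intros Ha Hex; rewrite (Series_incr_1 a Hex).
  assert (0 <= Series (fun k => a (S k))).
  { apply Series_ge0; [intros; apply Ha |].
    exact (proj1 (ex_series_incr_1 a) Hex). }
  lra.
Qed.

Lemma Rabs_Cdot_le (w c : C) : Rabs (fst w * fst c + snd w * snd c) <= Cmod w * Cmod c.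
Proof.
  rewrite <- Cmod_conj, <- Cmod_mult.
  replace (fst w * fst c + snd w * snd c) with (Re (Cconj w * c))
    by (destruct w, c; simpl; ring).
  apply re_le_Cmod.
Qed.

Lemma Cmod_Csum_le (c : nat -> C) (a : nat -> R) :
  (forall n, Cmod (c n) <= a n) -> ex_series a -> Cmod (Csum c) <= Series a.
Proof.
  intros Hca Ha.
  assert (Hfst : forall n, Rabs (fst (c n)) <= a n).
  { intros n; eapply Rle_trans; [apply Rmax_l | eapply Rle_trans; [apply Rmax_Cmod | apply Hca]]. }
  assert (Hsnd : forall n, Rabs (snd (c n)) <= a n).
  { intros n; eapply Rle_trans; [apply Rmax_r | eapply Rle_trans; [apply Rmax_Cmod | apply Hca]]. }
  assert (ex_comp : forall f : nat -> R, (forall n, Rabs (f n) <= a n) -> ex_series f).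
  { intros f Hf; apply (@ex_series_le R_AbsRing R_CompleteNormedModule _ a Hf Ha). }
  set (s := Csum c); set (M := Cmod s).
  assert (Hsq : M ^ 2 = Series (fun n => fst s * fst (c n) + snd s * snd (c n))).
  { rewrite Series_plus; [| exact (ex_series_scal_l _ _ (ex_comp _ Hfst))
                          | exact (ex_series_scal_l _ _ (ex_comp _ Hsnd))].
    rewrite !Series_scal_l; unfold M; rewrite Cmod2_alt; simpl; ring. }
  assert (Hdot : M ^ 2 <= M * Series a).
  { rewrite Hsq, <- Series_scal_l.
    eapply Rle_trans; [apply Rle_abs |].
    apply Rabs_Series_le; [| exact (ex_series_scal_l _ _ Ha)].
    intros n; eapply Rle_trans; [apply (Rabs_Cdot_le s (c n)) |].
    apply Rmult_le_compat_l; [apply Cmod_ge_0 | apply Hca]. }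
  assert (HM : 0 <= M) by apply Cmod_ge_0.
  assert (HS : 0 <= Series a).
  { apply Series_ge0; [| exact Ha].
    intros n; eapply Rle_trans; [apply Cmod_ge_0 | apply Hca]. }
  nra.
Qed.

Lemma Cmod_cis (theta : R) : Cmod (cis theta) = 1.
Proof.
  unfold Cmod, cis; simpl.
  rewrite !Rmult_1_r, Rplus_comm; fold (Rsqr (sin theta)) (Rsqr (cos theta)).
  rewrite sin2_cos2; apply sqrt_1.
Qed.

Section GeneralizedFactorial.

Variable x : nat -> R.
Hypothesis x_ge0 : forall n, 0 <= x n.
Hypothesis x_incr : forall n, x n < x (S n).

Lemma xfact_pos n : 0 < xfact x n.
Proof.
  induction n as [|n IH]; simpl; [lra |].
  apply Rmult_lt_0_compat; [exact IH |].
  pose proof (x_ge0 n); pose proof (x_incr n); lra.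
Qed.

Lemma Ncoef_ge0 n : 0 <= Ncoef x n.
Proof. left; apply Rinv_0_lt_compat, xfact_pos. Qed.

Lemma ex_series_Ncoef (t : R) : 0 <= t -> Rbar_lt (Finite t) (CV_radius (Ncoef x)) ->
  ex_series (fun n => Ncoef x n * t ^ n).
Proof.
  intros Ht Hr.
  rewrite <- (Rabs_pos_eq t Ht) in Hr.
  eapply ex_series_ext; [| exact (CV_disk_inside _ _ Hr)].
  intros n; apply Rabs_pos_eq, Rmult_le_pos; [apply Ncoef_ge0 | apply pow_le, Ht].
Qed.

Lemma Nfun_ge1 (t : R) : 0 <= t -> Rbar_lt (Finite t) (CV_radius (Ncoef x)) -> 1 <= Nfun x t.
Proof.
  intros Ht Hr.
  replace 1 with (Ncoef x 0 * t ^ 0) by (unfold Ncoef; simpl; field).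
  unfold Nfun; apply (Series_ge_head (fun n => Ncoef x n * t ^ n)); [| exact (ex_series_Ncoef t Ht Hr)].
  intros n; apply Rmult_le_pos; [apply Ncoef_ge0 | apply pow_le, Ht].
Qed.

End GeneralizedFactorial.

Theorem mainTheorem4 (x : nat -> R) :
  x 0%nat = 0 ->
  (forall n, 0 <= x n) ->
  (forall n, x n < x (S n)) ->
  Rbar_lt (Finite 0) (CV_radius (Ncoef x)) ->
  forall (z : C), Rbar_lt (Finite (Cmod z ^ 2)) (CV_radius (Ncoef x)) ->
  forall (t : R), Cmod (zcheck x z t) <= Cmod z.
Proof.
  intros _ Hge0 Hincr _ z Hz t.
  assert (Hr2 : 0 <= Cmod z ^ 2) by apply pow2_ge_0.
  set (N := Nfun x (Cmod z ^ 2)).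
  assert (HN1 : 1 <= N) by (apply Nfun_ge1; assumption).
  set (c := fun n => (RtoC (Cmod z ^ (2 * n) / xfact x n)
                     * cis ((x (n + 2)%nat - x (n + 1)%nat) * t))%C).
  assert (Hc : forall n, Cmod (c n) <= Ncoef x n * (Cmod z ^ 2) ^ n).
  { intros n; unfold c; rewrite Cmod_mult, Cmod_cis, Cmod_R, Rabs_pos_eq.
    - unfold Ncoef; rewrite <- pow_mult; lra.
    - apply Rmult_le_pos; [apply pow_le, Cmod_ge_0 | apply Ncoef_ge0; assumption]. }
  assert (HcN : Cmod (Csum c) <= N)
    by (apply Cmod_Csum_le; [exact Hc | apply ex_series_Ncoef; assumption]).
  assert (HNC : RtoC N <> 0%C) by (intros E; apply (f_equal fst) in E; simpl in E; lra).
  unfold zcheck; fold N c.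
  rewrite Cmod_mult, Cmod_div, Cmod_R, Rabs_pos_eq by (assumption || lra).
  assert (Hz0 : 0 <= Cmod z) by apply Cmod_ge_0.
  apply (Rmult_le_reg_l N); [lra |].
  field_simplify; [| lra].
  nra.
Qed.
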